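(* Let $x:\mathbb{Z}^2\to\mathbb{RP}^n$ be a Q-net in general position (in particular, no quadrilateral strip of $x$ is contained in a plane). Then the following are equivalent: (i) $x$ is a multi-Q-net. (ii) Every two parameter lines of $x$ of the same direction are in perspective with respect to a point, i.e. for all $i_0\neq i_1$ there is a point $c$ such that $x_{i_0,j},x_{i_1,j},c$ are collinear for all $j$, and for all $j_0\ne j_1$ there is a point $c'$ such that $x_{i,j_0},x_{i,j_1},c'$ are collinear for all $i$. (iii) Every two neighboring parameter lines of $x$ ($x_{i,\cdot}$ and $x_{i+1,\cdot}$, resp. $x_{\cdot,j}$ and $x_{\cdot,j+1}$) are in perspective with respect to a point. (iv) There exist $\mathbf{p},\mathbf{q}:\mathbb{Z}\to\mathbb{R}^{n+1}$ such that $x_{i,j}=[\mathbf{p}_i+\mathbf{q}_j]$ for all $i,j$. (v) Both Laplace transforms of $x$ degenerate to curves, i.e. $y^1_{i,j}$ is independent of $j$ and $y^2_{i,j}$ is independent of $i$.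
   Context: A Q-net is a map $x:\mathbb{Z}^2\to\mathbb{RP}^n$, $x_{i,j}:=x(i,j)$, such that for all $i,j$ the points $x_{i,j},x_{i+1,j},x_{i+1,j+1},x_{i,j+1}$ are coplanar. A multi-Q-net is a map $x:\mathbb{Z}^2\to\mathbb{RP}^n$ such that for all $i_0\neq i_1$, $j_0\neq j_1$ the points $x_{i_0,j_0},x_{i_0,j_1},x_{i_1,j_1},x_{i_1,j_0}$ are coplanar. For an elementary quadrilateral of a Q-net, the Laplace points are $y^1_{i,j}$ = the intersection of the lines $x_{i,j}x_{i+1,j}$ and $x_{i,j+1}x_{i+1,j+1}$, and $y^2_{i,j}$ = the intersection of the lines $x_{i,j}x_{i,j+1}$ and $x_{i+1,j}x_{i+1,j+1}$; the nets $y^1,y^2$ are the Laplace transforms of $x$. For $\mathbf{v}\in\mathbb{R}^{n+1}\setminus\{0\}$, $[\mathbf{v}]$ denotes the corresponding point of $\mathbb{RP}^n$. The parameter lines of $x$ are the polygons $x_{i,\cdot}$ and $x_{\cdot,j}$. *)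

(* Points of RP^n are represented by nonzero row vectors of
   'rV[R]_(n.+1); projective notions are expressed via matrix rank. *)
From HB Require Import structures.
From mathcomp Require Import all_boot all_order all_algebra.
Set Implicit Arguments. Unset Strict Implicit. Unset Printing Implicit Defensive.
Import Order.TTheory GRing.Theory Num.Theory.
Local Open Scope ring_scope.

Section Defs.
Variables (R : realFieldType) (n : nat).
Notation vec := 'rV[R]_(n.+1).

Definition proj_eq (u v : vec) : Prop := exists k : R, k != 0 /\ u = k *: v.

Definition collinear3 (a b c : vec) : Prop :=
  (\rank (col_mx a (col_mx b c)) <= 2)%N.

Definition coplanar4 (a b c d : vec) : Prop :=
  (\rank (col_mx a (col_mx b (col_mx c d))) <= 3)%N.

Definition Qnet (x : int -> int -> vec) : Prop :=
  forall i j : int, coplanar4 (x i j) (x (i + 1) j) (x (i + 1) (j + 1)) (x i (j + 1)).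

Definition multiQnet (x : int -> int -> vec) : Prop :=
  forall i0 i1 j0 j1 : int, i0 != i1 -> j0 != j1 ->
    coplanar4 (x i0 j0) (x i0 j1) (x i1 j1) (x i1 j0).

Definition general_position (x : int -> int -> vec) : Prop :=
  (forall i j, x i j != 0) /\
  (forall i1 j1 i2 j2 i3 j3 : int,
      (i1, j1) != (i2, j2) -> (i1, j1) != (i3, j3) -> (i2, j2) != (i3, j3) ->
      ~ collinear3 (x i1 j1) (x i2 j2) (x i3 j3)) /\
  (forall i : int, ~ exists P : 'M[R]_(3, n.+1),
      forall j, submx (x i j) P && submx (x (i + 1) j) P) /\
  (forall j : int, ~ exists P : 'M[R]_(3, n.+1),
      forall i, submx (x i j) P && submx (x i (j + 1)) P).

Definition rows_in_perspective (x : int -> int -> vec) (i0 i1 : int) : Prop :=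
  exists c : vec, c != 0 /\ forall j, collinear3 (x i0 j) (x i1 j) c.

Definition cols_in_perspective (x : int -> int -> vec) (j0 j1 : int) : Prop :=
  exists c : vec, c != 0 /\ forall i, collinear3 (x i j0) (x i j1) c.

Definition laplace1 (x : int -> int -> vec) (i j : int) (y : vec) : Prop :=
  y != 0 /\ collinear3 (x i j) (x (i + 1) j) y /\
  collinear3 (x i (j + 1)) (x (i + 1) (j + 1)) y.

Definition laplace2 (x : int -> int -> vec) (i j : int) (y : vec) : Prop :=
  y != 0 /\ collinear3 (x i j) (x i (j + 1)) y /\
  collinear3 (x (i + 1) j) (x (i + 1) (j + 1)) y.

End Defs.

From HB Require Import structures.
From mathcomp Require Import all_boot all_order all_algebra zify.
From Stdlib Require Import IndefiniteDescription Classical.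
Set Implicit Arguments. Unset Strict Implicit. Unset Printing Implicit Defensive.
Import Order.TTheory GRing.Theory Num.Theory.
Local Open Scope ring_scope.

(* If all quadrilaterals x_{i0,j0} x_{i0,j1} x_{i1,j1} x_{i1,j0} are planar, the lines
   x_{i,j} x_{i+1,j} (j in Z) meet pairwise; as they do not lie in one plane, they pass through
   one point, a centre of perspectivity of the parameter lines x_{i,.} and x_{i+1,.}.  Given such
   centres a_i and d_j, choose representatives p_i of x_{i,0} with p_{i+1} - p_i a multiple of
   a_i, and similarly q_j along x_{0,.}; then x_{i,j} = [p_i + q_j] spreads square by square,
   since a vertex of a quadrilateral is the meet of the lines joining its two neighbours to the
   centres.  Conversely, for x = [p + q] the point [p_{i0} - p_{i1}] is a centre for rows i0, i1
   and, when i1 = i + 1, it is the Laplace point y^1_{i,j} for every j; and a Laplace transform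
   degenerating to a curve provides the centres. *)

Ltac submx_adds := match goal with
  | |- is_true (submx ?A ?A) => apply: submx_refl
  | |- is_true (submx (addsmx _ _) _) =>
      rewrite addsmx_sub; apply/andP; split; submx_adds
  | |- _ => first [ assumption
                  | apply: (submx_trans _ (addsmxSl _ _)); submx_adds
                  | apply: (submx_trans _ (addsmxSr _ _)); submx_adds ]
  end.

Ltac distinct_pairs :=
  rewrite xpair_eqE; apply/negP => /andP[/eqP ? /eqP ?]; lia.

Section RowSpaces.
Variables (F : fieldType) (m : nat).
Implicit Types a b c d u v w : 'rV[F]_m.

Lemma submx_of_rank_geq m1 m2 (A : 'M[F]_(m1, m)) (B : 'M[F]_(m2, m)) :
  (A <= B)%MS -> (\rank B <= \rank A)%N -> (B <= A)%MS.
Proof. by move=> sAB leBA; rewrite -(mxrank_leqif_sup sAB).2 eqn_leq leBA mxrankS. Qed.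

Lemma col_mx3_eqmx a b c : (col_mx a (col_mx b c) :=: a + b + c)%MS.
Proof.
rewrite -addsmxA; apply: eqmx_trans (eqmx_sym (addsmxE _ _)) _.
exact: adds_eqmx (eqmx_refl a) (eqmx_sym (addsmxE b c)).
Qed.

Lemma col_mx4_eqmx a b c d : (col_mx a (col_mx b (col_mx c d)) :=: a + b + c + d)%MS.
Proof.
rewrite -!addsmxA; apply: eqmx_trans (eqmx_sym (addsmxE _ _)) (adds_eqmx (eqmx_refl a) _).
exact: eqmx_trans (eqmx_sym (addsmxE _ _)) (adds_eqmx (eqmx_refl b) (eqmx_sym (addsmxE c d))).
Qed.

Lemma rank_adds_row m1 (A : 'M[F]_(m1, m)) v : (\rank (A + v)%MS <= \rank A + 1)%N.
Proof.
have [le_sum _] := mxrank_adds_leqif A v.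
by apply: leq_trans le_sum _; rewrite leq_add2l rank_leq_row.
Qed.

Lemma rank_adds2 u v : (\rank (u + v)%MS <= 2)%N.
Proof. by apply: leq_trans (rank_adds_row _ _) _; rewrite (leq_add2r 1 _ 1) rank_leq_row. Qed.

Lemma rank_adds3 u v w : (\rank (u + v + w)%MS <= 3)%N.
Proof. by apply: leq_trans (rank_adds_row _ _) _; rewrite (leq_add2r 1 _ 2) rank_adds2. Qed.

Lemma rank_line_of_plane u v w : (2 < \rank (u + v + w)%MS)%N -> (2 <= \rank (u + v)%MS)%N.
Proof. by move=> r3; have := leq_trans r3 (rank_adds_row _ _); rewrite addn1 ltnS. Qed.

Lemma sub_line_of_rank m1 m2 (S : 'M[F]_(m1, m)) u v (W : 'M[F]_(m2, m)) :
  (\rank S <= 2)%N -> (2 <= \rank (u + v)%MS)%N ->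
  (u <= S)%MS -> (v <= S)%MS -> (W <= S)%MS -> (W <= u + v)%MS.
Proof.
move=> rS ruv uS vS WS; apply: submx_trans WS _; apply: submx_of_rank_geq.
  by rewrite addsmx_sub uS.
exact: leq_trans rS ruv.
Qed.

Lemma lines_meet_rank1 u v a b c d :
  (u <= a + b)%MS -> (v <= a + b)%MS -> (u <= c + d)%MS -> (v <= c + d)%MS ->
  (2 < \rank (a + b + c)%MS)%N -> (\rank (u + v)%MS <= 1)%N.
Proof.
move=> ua va uc vc r3; rewrite leqNgt; apply/negP => ruv.
have ab_uv : (a + b <= u + v)%MS by apply: (sub_line_of_rank (rank_adds2 a b)).
have : (a + b + c <= c + d)%MS.
  by rewrite addsmx_sub addsmxSl andbT (submx_trans ab_uv) // addsmx_sub uc vc.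
by move/mxrankS/leq_trans/(_ (rank_adds2 c d)); rewrite leqNgt r3.
Qed.

Lemma exists_nz_row m1 (A : 'M[F]_(m1, m)) :
  (0 < \rank A)%N -> exists2 y : 'rV[F]_m, y != 0 & (y <= A)%MS.
Proof. by rewrite lt0n mxrank_eq0 => nzA; exists (nz_row A); rewrite ?nz_row_eq0 ?nz_row_sub. Qed.

Lemma coplanar_lines_meet a b c d :
  (\rank (a + b + c + d)%MS <= 3)%N -> (2 <= \rank (a + b)%MS)%N ->
  (2 <= \rank (c + d)%MS)%N -> exists2 y : 'rV[F]_m, y != 0 & (y <= (a + b) :&: (c + d))%MS.
Proof.
move=> r4 rab rcd; apply: (exists_nz_row (A := ((a + b) :&: (c + d))%MS)).
have := mxrank_sum_cap (a + b)%MS (c + d)%MS; rewrite !addsmxA; lia.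
Qed.

End RowSpaces.

Section ProjectivePoints.
Variables (R : realFieldType) (n : nat).
Implicit Types a b c d e f t u v w : 'rV[R]_n.+1.

Lemma collinear3E a b c : collinear3 a b c <-> (\rank (a + b + c)%MS <= 2)%N.
Proof. by rewrite /collinear3 col_mx3_eqmx. Qed.

Lemma coplanar4E a b c d : coplanar4 a b c d <-> (\rank (a + b + c + d)%MS <= 3)%N.
Proof. by rewrite /coplanar4 col_mx4_eqmx. Qed.

Lemma collinear3_sub_line a b c : collinear3 a b c -> (2 <= \rank (a + b)%MS)%N -> (c <= a + b)%MS.
Proof. by move=> /collinear3E r2 rab; apply: (sub_line_of_rank r2 rab); submx_adds. Qed.

Lemma collinear3_sub a b c : (c <= a + b)%MS -> collinear3 a b c.
Proof.
move=> cab; apply/collinear3E; apply: leq_trans (rank_adds2 a b); apply: mxrankS.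
by rewrite addsmx_sub cab submx_refl.
Qed.

Lemma collinear3_subr a b c c' : collinear3 a b c -> (c' <= c)%MS -> collinear3 a b c'.
Proof.
by move=> /collinear3E r2 c'c; apply/collinear3E; apply: leq_trans r2; rewrite mxrankS ?addsmxS.
Qed.

Lemma collinear3C a b c : collinear3 a b c -> collinear3 b a c.
Proof.
by move=> /collinear3E r2; apply/collinear3E; apply: leq_trans r2; rewrite mxrankS //; submx_adds.
Qed.

Lemma coplanar4_sub a b c d a' b' c' d' : coplanar4 a b c d ->
  (a' + b' + c' + d' <= a + b + c + d)%MS -> coplanar4 a' b' c' d'.
Proof. by move=> /coplanar4E r3 sub; apply/coplanar4E; apply: leq_trans r3; rewrite mxrankS. Qed.

Lemma proj_eq_refl u : proj_eq u u.
Proof. by exists 1; rewrite oner_eq0 scale1r. Qed.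

Lemma proj_eq_sym u v : proj_eq u v -> proj_eq v u.
Proof.
case=> k [nzk ->]; exists k^-1; split; first by rewrite invr_eq0.
by rewrite scalerA mulVf // scale1r.
Qed.

Lemma proj_eq_trans u v w : proj_eq u v -> proj_eq v w -> proj_eq u w.
Proof. by case=> k [nzk ->] [l [nzl ->]]; exists (k * l); rewrite mulf_neq0 // scalerA. Qed.

Lemma proj_eq_eqmx u v : proj_eq u v -> (u :=: v)%MS.
Proof. by case=> k [nzk ->]; apply: eqmx_scale. Qed.

Lemma proj_eq_nz u v : u != 0 -> proj_eq u v -> v != 0.
Proof. by move=> nzu [k [_ def_u]]; apply: contraNneq nzu => v0; rewrite def_u v0 scaler0. Qed.

Lemma proj_eq_rank1 u v : u != 0 -> v != 0 -> (\rank (u + v)%MS <= 1)%N -> proj_eq u v.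
Proof.
move=> nzu nzv r1; have : (u <= v)%MS.
  have : (u + v <= v)%MS by apply: submx_of_rank_geq; rewrite ?addsmxSr // rank_rV nzv.
  by rewrite addsmx_sub => /andP[].
case/sub_rVP=> k def_u; exists k; split => //.
by apply: contraNneq nzu => k0; rewrite def_u k0 scale0r.
Qed.

Lemma rescale_on_line u t w e : proj_eq u t -> (w <= u + e)%MS -> (2 <= \rank (w + e)%MS)%N ->
  exists t', proj_eq w t' /\ (t' - t <= e)%MS.
Proof.
move=> ut; rewrite (adds_eqmx (proj_eq_eqmx ut) (eqmx_refl e)).
case/sub_addsmxP=> [[k l] /= def_w] r2.
have {}def_w : w = k 0 0 *: t + l 0 0 *: e.
  by rewrite def_w {1}[k]mx11_scalar {1}[l]mx11_scalar !mul_scalar_mx.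
have nzk : k 0 0 != 0.
  apply: contraTneq r2 => k0; rewrite -ltnNge ltnS def_w k0 scale0r add0r.
  apply: (leq_trans _ (rank_leq_row e)); rewrite mxrankS // addsmx_sub submx_refl andbT.
  exact: scalemx_sub.
exists ((k 0 0)^-1 *: w); split.
  by exists (k 0 0); rewrite nzk scalerA mulfV // scale1r.
by rewrite def_w scalerDr !scalerA mulVf // scale1r addrC addKr scalemx_sub.
Qed.

Lemma proj_eq_corner D T N1 N2 T1 T2 e f : D != 0 -> proj_eq N1 T1 -> proj_eq N2 T2 ->
  (T - T1 <= e)%MS -> (T - T2 <= f)%MS -> (D <= N1 + e)%MS -> (D <= N2 + f)%MS ->
  (2 < \rank (N1 + N2 + D)%MS)%N -> proj_eq D T.
Proof.
move=> nzD N1T1 N2T2 T1e T2f D1 D2 r3.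
(* [D] and [T] both lie on the distinct lines [N1 + e] and [N2 + f]. *)
have on_line (N T' g : 'rV[R]_n.+1) : proj_eq N T' -> (T - T' <= g)%MS -> (T <= N + g)%MS.
  move=> /proj_eq_eqmx NT' T'g; rewrite -[T](subrK T') addmx_sub //.
    exact: submx_trans T'g (addsmxSr _ _).
  by rewrite -NT' addsmxSl.
have r3' : (2 < \rank (N1 + e + N2)%MS)%N.
  by apply: leq_trans r3 _; rewrite mxrankS //; submx_adds.
have [T0|nzT] := eqVneq T 0.
  move: T1e; rewrite T0 sub0r (eqmx_opp T1) -(proj_eq_eqmx N1T1) => N1e.
  have : (N1 + e + N2 <= e + N2)%MS by submx_adds.
  by move/mxrankS/leq_trans/(_ (rank_adds2 _ _)); rewrite leqNgt r3'.
apply: proj_eq_rank1 => //; apply: (lines_meet_rank1 (d := f) _ _ _ _ r3') => //.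
  exact: on_line N1T1 T1e.
exact: on_line N2T2 T2f.
Qed.

End ProjectivePoints.

Lemma nat_dependent_choice (T : Type) (P : nat -> T -> Prop) (step : nat -> T -> T -> Prop)
    (t0 : T) :
  P 0%N t0 -> (forall k t, P k t -> exists t', P k.+1 t' /\ step k t t') ->
  exists s : nat -> T, s 0%N = t0 /\ forall k, P k (s k) /\ step k (s k) (s k.+1).
Proof.
move=> P0 extend.
have [f Hf] : exists f : nat * T -> T,
    forall kt, P kt.1 kt.2 -> P kt.1.+1 (f kt) /\ step kt.1 kt.2 (f kt).
  apply: (@functional_choice _ _ (fun kt t' => P kt.1 kt.2 -> P kt.1.+1 t' /\ step kt.1 kt.2 t')).
  move=> [k t]; have [/extend[t' ?]|nPt] := classic (P k t); first by exists t'.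
  by exists t0 => /nPt.
pose fix s k := if k is k'.+1 then f (k', s k') else t0.
have Ps k : P k (s k) by elim: k => //= k /(Hf (k, _))[].
by exists s; split => // k; split; [|case: (Hf (k, s k) (Ps k))].
Qed.

Lemma int_dependent_choice (T : Type) (P : int -> T -> Prop) (step : int -> T -> T -> Prop)
    (t0 : T) :
  P 0 t0 -> (forall k t, P k t -> exists t', P (k + 1) t' /\ step k t t') ->
  (forall k t', P (k + 1) t' -> exists t, P k t /\ step k t t') ->
  exists s : int -> T, s 0 = t0 /\ forall k, P k (s k) /\ step k (s k) (s (k + 1)).
Proof.
move=> P0 up down.
have up' k t : P k%:Z t -> exists t', P k.+1%:Z t' /\ step k%:Z t t'.
  by move/up; have -> : k%:Z + 1 = k.+1%:Z by lia.
have down' k t : P (- k%:Z) t -> exists t', P (- k.+1%:Z) t' /\ step (- k.+1%:Z) t' t.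
  by move=> Pt; apply: down; have -> : - k.+1%:Z + 1 = - k%:Z by lia.
have [sp [sp0 Hsp]] := @nat_dependent_choice T (fun k => P k%:Z) _ t0 P0 up'.
have [sn [sn0 Hsn]] := @nat_dependent_choice T (fun k => P (- k%:Z)) _ t0 P0 down'.
pose s k := if k is Posz k' then sp k' else sn `|k|%N.
have sN k : s (- k%:Z) = sn k by case: k => [|k] //=; rewrite sp0 sn0.
exists s; split => // -[k|k].
  have -> : Posz k + 1 = k.+1%:Z by lia.
  exact: Hsp.
rewrite NegzE; have -> : - k.+1%:Z + 1 = - k%:Z by lia.
by rewrite !sN; split; [case: (Hsn k.+1) | case: (Hsn k)].
Qed.

Lemma int_ind_succ_pred (P : int -> Prop) :
  P 0 -> (forall i, P i -> P (i + 1)) -> (forall i, P (i + 1) -> P i) -> forall i, P i.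
Proof.
move=> P0 up down; elim/int_rect => // k Pk.
  have <- : k%:Z + 1 = k.+1%:Z by lia.
  exact: up.
by apply: down; have -> : - k.+1%:Z + 1 = - k%:Z by lia.
Qed.

Definition unit_edge (k K K' : int) : bool :=
  ((K == k) && (K' == k + 1)) || ((K == k + 1) && (K' == k)).

Lemma unit_edge_neq k K K' : unit_edge k K K' -> K != K'.
Proof. by case/orP=> /andP[/eqP-> /eqP->]; apply/eqP; lia. Qed.

Lemma grid_ind (Q : int -> int -> Prop) :
  (forall j, Q 0 j) -> (forall i, Q i 0) ->
  (forall i j I I' J J', unit_edge i I I' -> unit_edge j J J' -> Q I' J -> Q I J' -> Q I J) ->
  forall i j, Q i j.
Proof.
move=> Q0j Qi0 corner; apply: int_ind_succ_pred => // i Qi;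
  apply: int_ind_succ_pred => // j Qj;
  by apply: (corner i j) (Qi _) Qj; rewrite /unit_edge !eqxx ?orbT.
Qed.

Section Pencil.
Variables (F : fieldType) (m : nat) (I : eqType) (L : I -> 'M[F]_m) (i0 i1 : I).
Hypotheses (i01 : i0 != i1) (rankL : forall i, \rank (L i) = 2%N)
  (rank_pair : forall i j, i != j -> \rank (L i + L j)%MS = 3%N)
  (not_planar : exists k, ~~ (L k <= L i0 + L i1)%MS).

Let c := (L i0 :&: L i1)%MS.
Let plane := (L i0 + L i1)%MS.

Lemma rank_meet i j : i != j -> \rank (L i :&: L j)%MS = 1%N.
Proof. by move=> ij; have := mxrank_sum_cap (L i) (L j); rewrite rank_pair // !rankL; lia. Qed.

Lemma sub_meet_of_nz m1 (A : 'M[F]_(m1, m)) i j : i != j ->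
  (A <= L i :&: L j)%MS -> A != 0 -> (L i :&: L j <= A)%MS.
Proof.
by move=> ij sA nzA; apply: submx_of_rank_geq sA _; rewrite rank_meet // lt0n mxrank_eq0.
Qed.

Lemma line_in_plane j : ~~ (c <= L j)%MS -> (L j <= plane)%MS.
Proof.
move=> cLj.
have j0 : j != i0 by apply: contraNneq cLj => ->; exact: capmxSl.
have j1 : j != i1 by apply: contraNneq cLj => ->; exact: capmxSr.
set A0 := (L j :&: L i0)%MS; set A1 := (L j :&: L i1)%MS.
have A01 : (A0 :&: A1)%MS == 0.
  apply: contraNT cLj => nzA; rewrite (submx_trans (sub_meet_of_nz i01 _ nzA)) //.
    rewrite sub_capmx (submx_trans (capmxSl _ _) (capmxSr _ _)).
    exact: submx_trans (capmxSr _ _) (capmxSr _ _).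
  exact: submx_trans (capmxSl _ _) (capmxSl _ _).
have rankA : \rank (A0 + A1)%MS = 2%N.
  by have := mxrank_sum_cap A0 A1; rewrite (eqP A01) mxrank0 !rank_meet; lia.
have LjA : (L j <= A0 + A1)%MS.
  by apply: submx_of_rank_geq; rewrite ?addsmx_sub ?capmxSl ?rankA ?rankL.
by apply: submx_trans LjA _; apply: addsmxS; apply: capmxSr.
Qed.

Lemma plane_trace_sub k l : ~~ (L k <= plane)%MS -> (L l <= plane)%MS ->
  (L k :&: plane <= L l)%MS.
Proof.
move=> Lk Ll; have kl : k != l by apply: contraNneq Lk => ->.
have rank_trace : (\rank (L k :&: plane)%MS <= 1)%N.
  have : (3 < \rank (L k + plane)%MS)%N.
    rewrite ltnNge; apply: contra Lk => r3.
    have : (L k + plane <= plane)%MS.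
      by apply: submx_of_rank_geq; rewrite ?addsmxSr // rank_pair.
    by rewrite addsmx_sub => /andP[].
  by have := mxrank_sum_cap (L k) plane; rewrite rankL rank_pair //; lia.
have meet_trace : (L k :&: L l <= L k :&: plane)%MS by rewrite capmxS.
apply: submx_trans (capmxSr (L k) _).
by apply: submx_of_rank_geq meet_trace _; rewrite rank_meet.
Qed.

Lemma pencil_concurrent : exists2 p : 'rV[F]_m, p != 0 & forall j, (p <= L j)%MS.
Proof.
have [p nzp pc] : exists2 p : 'rV[F]_m, p != 0 & (p <= c)%MS.
  by apply: exists_nz_row; rewrite rank_meet.
exists p => // j; apply: submx_trans pc _; apply: contraT => cLj.
have [k Lk] := not_planar.
set M := (L k :&: plane)%MS.
have M_sub l : (L l <= plane)%MS -> (M <= L l)%MS by apply: plane_trace_sub.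
have Mc : (M <= c)%MS by rewrite sub_capmx !M_sub ?addsmxSl ?addsmxSr.
have nzM : M != 0.
  have k0 : k != i0 by apply: contraNneq Lk => ->; exact: addsmxSl.
  rewrite -mxrank_eq0 -lt0n; apply: leq_trans (mxrankS (capmxS (submx_refl _) (addsmxSl _ _))).
  by rewrite rank_meet.
have /(submx_trans (sub_meet_of_nz i01 Mc nzM)) := M_sub _ (line_in_plane cLj).
by rewrite (negbTE cLj).
Qed.

End Pencil.

Definition translation_repr (R : realFieldType) (n : nat) (x : int -> int -> 'rV[R]_n.+1)
    (p q : int -> 'rV[R]_n.+1) : Prop :=
  forall i j, p i + q j != 0 /\ proj_eq (x i j) (p i + q j).

Definition net_transpose (T : Type) (x : int -> int -> T) : int -> int -> T :=
  fun i j => x j i.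

Section Transpose.
Variables (R : realFieldType) (n : nat) (x : int -> int -> 'rV[R]_n.+1).

Lemma general_position_transpose : general_position x -> general_position (net_transpose x).
Proof.
case=> nz [noncol [strip1 strip2]]; split=> [i j|]; first exact: nz.
split; last by split.
move=> i1 j1 i2 j2 i3 j3 d12 d13 d23; apply: noncol; rewrite xpair_eqE andbC -xpair_eqE //.
Qed.

Lemma Qnet_transpose : Qnet x -> Qnet (net_transpose x).
Proof. by move=> Q i j; apply: coplanar4_sub (Q j i) _; rewrite /net_transpose; submx_adds. Qed.

Lemma multiQnet_transpose : multiQnet x -> multiQnet (net_transpose x).
Proof.
move=> M i0 i1 j0 j1 ni nj; apply: coplanar4_sub (M j0 j1 i0 i1 nj ni) _.
by rewrite /net_transpose; submx_adds.
Qed.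

Lemma translation_repr_transpose p q :
  translation_repr x p q -> translation_repr (net_transpose x) q p.
Proof. by move=> pq i j; rewrite addrC; apply: pq. Qed.

End Transpose.

Section GeneralPosition.
Variables (R : realFieldType) (n : nat) (x : int -> int -> 'rV[R]_n.+1).
Hypothesis GP : general_position x.

Lemma net_nz i j : x i j != 0.
Proof. by case: GP. Qed.

Lemma net_noncollinear i1 j1 i2 j2 i3 j3 :
  (i1, j1) != (i2, j2) -> (i1, j1) != (i3, j3) -> (i2, j2) != (i3, j3) ->
  (2 < \rank (x i1 j1 + x i2 j2 + x i3 j3)%MS)%N.
Proof.
case: GP => _ [noncol _] d12 d13 d23; rewrite ltnNge; apply/negP => r2.
by apply: (noncol _ _ _ _ _ _ d12 d13 d23); apply/collinear3E.
Qed.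

Lemma net_line i j i' j' : (i, j) != (i', j') -> (2 <= \rank (x i j + x i' j')%MS)%N.
Proof.
case: (eqVneq i i') => [<- d|/eqP ii' _].
  apply: (@rank_line_of_plane _ _ _ _ (x (i + 1) j)); apply: net_noncollinear => //;
    by distinct_pairs.
apply: (@rank_line_of_plane _ _ _ _ (x i (j + 1))); apply: net_noncollinear;
  by distinct_pairs.
Qed.

Lemma center_off_net i0 i1 c j : i0 != i1 -> c != 0 ->
  (forall j, collinear3 (x i0 j) (x i1 j) c) -> (2 <= \rank (x i1 j + c)%MS)%N.
Proof.
move=> i01 nzc col; rewrite leqNgt; apply/negP; rewrite ltnS => r1.
have xc : (x i1 j <= c)%MS by rewrite (proj_eq_eqmx (proj_eq_rank1 (net_nz _ _) nzc r1)).
have /collinear3E r2 := col (j + 1).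
have : (2 < \rank (x i0 (j + 1) + x i1 (j + 1) + x i1 j)%MS)%N.
  by move/eqP: i01 => i01; apply: net_noncollinear; distinct_pairs.
by rewrite ltnNge (leq_trans _ r2) // mxrankS // addsmxS.
Qed.

Lemma center_sub_line i0 i1 c j : i0 != i1 -> c != 0 ->
  (forall j, collinear3 (x i0 j) (x i1 j) c) -> (x i1 j <= x i0 j + c)%MS.
Proof.
move=> i01 nzc col; have /collinear3E r2 := col j.
have col' j' : collinear3 (x i1 j') (x i0 j') c by apply: collinear3C.
have r2' : (2 <= \rank (x i0 j + c)%MS)%N by apply: center_off_net nzc col'; rewrite eq_sym.
by apply: (sub_line_of_rank r2 r2'); submx_adds.
Qed.

Lemma center_step i c I I' j : c != 0 ->
  (forall j, collinear3 (x i j) (x (i + 1) j) c) -> unit_edge i I I' ->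
  (x I j <= x I' j + c)%MS /\ (2 <= \rank (x I j + c)%MS)%N.
Proof.
move=> nzc col /orP[]/andP[/eqP-> /eqP->].
  have col' j' : collinear3 (x (i + 1) j') (x i j') c by apply: collinear3C.
  by split; [apply: (center_sub_line _ _ nzc col') | apply: (center_off_net _ _ nzc col')];
    apply/eqP; lia.
by split; [apply: (center_sub_line _ _ nzc col) | apply: (center_off_net _ _ nzc col)];
  apply/eqP; lia.
Qed.

End GeneralPosition.

Section ScaledLift.
Variables (R : realFieldType) (n : nat).
Implicit Types w a p : int -> 'rV[R]_n.+1.

Lemma edge_diff_sub p a k K K' : (forall k, (p (k + 1)%R - p k <= a k)%MS) ->
  unit_edge k K K' -> (p K - p K' <= a k)%MS.
Proof. by move=> dp /orP[]/andP[/eqP-> /eqP->]; rewrite ?dp // -opprB eqmx_opp. Qed.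

Lemma scaled_lift w a :
  (forall k K K', unit_edge k K K' ->
     (w K <= w K' + a k)%MS /\ (2 <= \rank (w K + a k)%MS)%N) ->
  exists p, p 0 = w 0 /\ forall k, proj_eq (w k) (p k) /\ (p (k + 1)%R - p k <= a k)%MS.
Proof.
move=> edge; have up k : unit_edge k (k + 1) k by rewrite /unit_edge !eqxx orbT.
have down k : unit_edge k k (k + 1) by rewrite /unit_edge !eqxx.
apply: (int_dependent_choice (P := fun k t => proj_eq (w k) t)
  (step := fun k t t' => (t' - t <= a k)%MS)) => [|k t wt|k t' wt'].
- exact: proj_eq_refl.
- by have [sub r2] := edge _ _ _ (up k); apply: rescale_on_line wt sub r2.
- have [sub r2] := edge _ _ _ (down k).
  have [t [wt dt]] := rescale_on_line wt' sub r2.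
  by exists t; rewrite -opprB eqmx_opp.
Qed.

End ScaledLift.

Section Translation.
Variables (R : realFieldType) (n : nat) (x : int -> int -> 'rV[R]_n.+1) (a d : int -> 'rV[R]_n.+1).
Hypotheses (GP : general_position x)
  (row_centers : forall i, a i != 0 /\ forall j, collinear3 (x i j) (x (i + 1) j) (a i))
  (col_centers : forall j, d j != 0 /\ forall i, collinear3 (x i j) (x i (j + 1)) (d j)).

Lemma row_step i I I' j : unit_edge i I I' ->
  (x I j <= x I' j + a i)%MS /\ (2 <= \rank (x I j + a i)%MS)%N.
Proof. by have [nza col] := row_centers i; apply: (center_step GP). Qed.

Lemma col_step j J J' i : unit_edge j J J' ->
  (x i J <= x i J' + d j)%MS /\ (2 <= \rank (x i J + d j)%MS)%N.
Proof.
have [nzd col] := col_centers j.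
exact: (center_step (x := net_transpose x) (general_position_transpose GP) i nzd col).
Qed.

Lemma translation_corner p q i j I I' J J' :
  (forall i, (p (i + 1)%R - p i <= a i)%MS) -> (forall j, (q (j + 1)%R - q j <= d j)%MS) ->
  unit_edge i I I' -> unit_edge j J J' ->
  proj_eq (x I' J) (p I' + q J) -> proj_eq (x I J') (p I + q J') ->
  proj_eq (x I J) (p I + q J).
Proof.
move=> dp dq eI eJ repI' repJ'.
apply: (proj_eq_corner (e := a i) (f := d j) (net_nz GP I J) repI' repJ').
- by rewrite opprD addrACA subrr addr0; apply: edge_diff_sub dp eI.
- by rewrite opprD addrACA subrr add0r; apply: edge_diff_sub dq eJ.
- exact: (row_step J eI).1.
- exact: (col_step I eJ).1.
- move: (unit_edge_neq eI) (unit_edge_neq eJ) => /eqP II' /eqP JJ'.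
  by apply: (net_noncollinear GP); distinct_pairs.
Qed.

Lemma translation_of_centers : exists p q, translation_repr x p q.
Proof.
have [p [p0 Hp]] := scaled_lift (w := fun i => x i 0) (fun k K K' e => row_step 0 e).
have [r [r0 Hr]] := scaled_lift (w := x 0) (fun k K K' e => col_step 0 e).
(* [p 0 = r 0 = x 0 0], hence [p i + q 0 = p i] and [p 0 + q j = r j]. *)
pose q j := r j - x 0 0.
have dq j : (q (j + 1)%R - q j <= d j)%MS by rewrite /q opprB addrA subrK; exact: (Hr j).2.
have rep : forall i j, proj_eq (x i j) (p i + q j).
  apply: grid_ind => [j|i|i j I I' J J' eI eJ].
  - by rewrite p0 /q addrC subrK; exact: (Hr j).1.
  - by rewrite /q r0 subrr addr0; exact: (Hp i).1.
  - by apply: translation_corner eI eJ => // k; exact: (Hp k).2.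
by exists p, q => i j; split; [apply: proj_eq_nz (net_nz GP i j) (rep i j) | apply: rep].
Qed.

End Translation.

Section TranslationNet.
Variables (R : realFieldType) (n : nat) (x : int -> int -> 'rV[R]_n.+1) (p q : int -> 'rV[R]_n.+1).
Hypotheses (GP : general_position x) (Hpq : translation_repr x p q).

Lemma translation_sub i j : ((p i + q j)%R <= x i j)%MS.
Proof. by rewrite -(proj_eq_eqmx (Hpq i j).2). Qed.

Lemma diff_sub_line i i' j : (p i - p i' <= x i j + x i' j)%MS.
Proof.
have -> : p i - p i' = (p i + q j) - (p i' + q j) by rewrite opprD addrACA subrr addr0.
rewrite addmx_sub ?(eqmx_opp (p i' + q j)) //.
  exact: submx_trans (translation_sub i j) (addsmxSl _ _).
exact: submx_trans (translation_sub i' j) (addsmxSr _ _).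
Qed.

Lemma diff_nz i i' : i != i' -> p i - p i' != 0.
Proof.
move=> ii'; apply/negP => /eqP/subr0_eq pii'.
have : (x i 0 + x i' 0 <= (p i + q 0)%R)%MS.
  by rewrite addsmx_sub (proj_eq_eqmx (Hpq i 0).2) pii' (proj_eq_eqmx (Hpq i' 0).2) submx_refl.
move/mxrankS/leq_trans/(_ (rank_leq_row _)).
by rewrite leqNgt (net_line GP) // xpair_eqE negb_and ii'.
Qed.

Lemma translation_rows_in_perspective i0 i1 : i0 != i1 -> rows_in_perspective x i0 i1.
Proof.
move=> i01; exists (p i0 - p i1); split; first exact: diff_nz.
by move=> j; apply: collinear3_sub; apply: diff_sub_line.
Qed.

Lemma translation_multiQnet : multiQnet x.
Proof.
move=> i0 i1 j0 j1 _ _; apply/coplanar4E.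
apply: leq_trans (rank_adds3 (x i0 j0) (x i0 j1) (x i1 j1)); rewrite mxrankS //.
rewrite addsmx_sub submx_refl (proj_eq_eqmx (Hpq i1 j0).2).
have -> : p i1 + q j0 = (p i0 + q j0) - (p i0 + q j1) + (p i1 + q j1).
  by rewrite [p i0 + q j0]addrC addrKA [p i1 + q j1]addrC subrKA addrC.
have s00 := translation_sub i0 j0; have s01 := translation_sub i0 j1.
have s11 := translation_sub i1 j1; apply: addmx_sub; last by submx_adds.
by apply: addmx_sub; rewrite ?(eqmx_opp (p i0 + q j1)); submx_adds.
Qed.

Lemma laplace1_translation i j y : laplace1 x i j y -> proj_eq y (p i - p (i + 1)).
Proof.
case=> nzy [c1 c2]; have ii : i != i + 1 by apply/eqP; lia.
apply: proj_eq_rank1 nzy (diff_nz ii) _.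
apply: (lines_meet_rank1 (a := x i j) (b := x (i + 1) j) (c := x i (j + 1))
  (d := x (i + 1) (j + 1))); rewrite ?diff_sub_line //.
- by apply: collinear3_sub_line c1 _; apply: (net_line GP); distinct_pairs.
- by apply: collinear3_sub_line c2 _; apply: (net_line GP); distinct_pairs.
- by apply: (net_noncollinear GP); distinct_pairs.
Qed.

Lemma translation_laplace1_const i j j' y y' :
  laplace1 x i j y -> laplace1 x i j' y' -> proj_eq y y'.
Proof.
move=> l1 l2; apply: proj_eq_trans (laplace1_translation l1) _.
exact/proj_eq_sym/(laplace1_translation l2).
Qed.

End TranslationNet.

Section NeighbouringRows.
Variables (R : realFieldType) (n : nat) (x : int -> int -> 'rV[R]_n.+1).
Hypothesis GP : general_position x.

Lemma laplace1_exists : Qnet x -> forall i j, exists y, laplace1 x i j y.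
Proof.
move=> Q i j.
have [|||y nzy] := @coplanar_lines_meet _ _ (x i j) (x (i + 1) j) (x i (j + 1)) (x (i + 1) (j + 1)).
- apply: leq_trans _ ((coplanar4E _ _ _ _).1 (Q i j)).
  by rewrite mxrankS //; submx_adds.
- by apply: (net_line GP); distinct_pairs.
- by apply: (net_line GP); distinct_pairs.
rewrite sub_capmx => /andP[y1 y2].
by exists y; split=> //; split; apply: collinear3_sub.
Qed.

Lemma rows_perspective_of_laplace1 : Qnet x ->
  (forall i j j' y y', laplace1 x i j y -> laplace1 x i j' y' -> proj_eq y y') ->
  forall i, rows_in_perspective x i (i + 1).
Proof.
move=> Q const i; have [y0 lap0] := laplace1_exists Q i 0.
exists y0; split; first by case: lap0.
move=> j; have [yj lapj] := laplace1_exists Q i j.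
have [_ [colj _]] := lapj; apply: collinear3_subr colj _.
by rewrite (proj_eq_eqmx (const _ _ _ _ _ lapj lap0)).
Qed.

Lemma rows_perspective_of_multiQnet : multiQnet x -> forall i, rows_in_perspective x i (i + 1).
Proof.
move=> M i; pose L j := (x i j + x (i + 1) j)%MS.
have ii : i != i + 1 by apply/eqP; lia.
have rankL j : \rank (L j) = 2%N.
  by apply/eqP; rewrite eqn_leq rank_adds2 (net_line GP) // xpair_eqE negb_and ii.
have rank_pair j j' : j != j' -> \rank (L j + L j')%MS = 3%N.
  move=> jj'; apply/eqP; rewrite eqn_leq; apply/andP; split.
    apply: leq_trans _ ((coplanar4E _ _ _ _).1 (M i (i + 1) j j' ii jj')).
    by rewrite mxrankS // /L; submx_adds.
  apply: leq_trans
    (net_noncollinear GP (i1 := i) (j1 := j) (i2 := i + 1) (j2 := j) (i3 := i) (j3 := j') _ _ _) _.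
  - by distinct_pairs.
  - by move/eqP: jj' => ?; distinct_pairs.
  - by move/eqP: jj' => ?; distinct_pairs.
  by rewrite mxrankS // /L; submx_adds.
have not_planar : exists k, ~~ (L k <= L 0 + L 1)%MS.
  case: (classic (exists k, ~~ (L k <= L 0 + L 1)%MS)) => // all_planar.
  have [_ [_ [strip _]]] := GP; case: (strip i).
  exists (col_mx (x i 0) (col_mx (x (i + 1) 0) (x i 1))) => k.
  have planeP : (L 0 + L 1 <= col_mx (x i 0) (col_mx (x (i + 1) 0) (x i 1)))%MS.
    rewrite col_mx3_eqmx; apply: submx_of_rank_geq; first by rewrite /L; submx_adds.
    rewrite rank_pair //; apply: (net_noncollinear GP); distinct_pairs.
  have Lk : (L k <= L 0 + L 1)%MS by apply: contraT => nLk; case: all_planar; exists k.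
  by rewrite !(submx_trans _ planeP) // (submx_trans _ Lk) // /L ?addsmxSl ?addsmxSr.
have [c nzc cL] := pencil_concurrent (L := L) (isT : (0 : int) != 1) rankL rank_pair not_planar.
by exists c; split => // j; apply: collinear3_sub; apply: cL.
Qed.

End NeighbouringRows.

Theorem theorem2p3 (R : realFieldType) (n : nat) (x : int -> int -> 'rV[R]_(n.+1)) :
  Qnet x -> general_position x ->
  [<->
    (* (i) *) multiQnet x;
    (* (ii) *) (forall i0 i1 : int, i0 != i1 -> rows_in_perspective x i0 i1) /\
               (forall j0 j1 : int, j0 != j1 -> cols_in_perspective x j0 j1);
    (* (iii) *) (forall i : int, rows_in_perspective x i (i + 1)) /\
                (forall j : int, cols_in_perspective x j (j + 1));
    (* (iv) *) exists p q : int -> 'rV[R]_(n.+1),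
                 forall i j : int, p i + q j != 0 /\ proj_eq (x i j) (p i + q j);
    (* (v) *) (forall i j j' y y', laplace1 x i j y -> laplace1 x i j' y' -> proj_eq y y') /\
              (forall i i' j y y', laplace2 x i j y -> laplace2 x i' j y' -> proj_eq y y')
  ].
Proof.
move=> Q GP; have GPt := general_position_transpose GP.
have translation : (forall i, rows_in_perspective x i (i + 1)) ->
    (forall j, cols_in_perspective x j (j + 1)) -> exists p q, translation_repr x p q.
  move=> /(functional_choice (fun i c => c != 0 /\ _)) [a Ha].
  move=> /(functional_choice (fun j c => c != 0 /\ _)) [d Hd].
  exact: (translation_of_centers GP Ha Hd).
tfae.
- move=> M; have [p [q pq]] := translation (rows_perspective_of_multiQnet GP M)
    (rows_perspective_of_multiQnet GPt (multiQnet_transpose M)).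
  split; first exact: translation_rows_in_perspective GP pq.
  exact: translation_rows_in_perspective GPt (translation_repr_transpose pq).
- by case=> rows cols; split=> [i|j]; [apply: rows | apply: cols]; apply/eqP; lia.
- by case=> rows cols; apply: translation.
- case=> p [q pq]; split; first exact: translation_laplace1_const GP pq.
  move=> i i' j y y' l1 l2.
  exact: (translation_laplace1_const GPt (translation_repr_transpose pq) l1 l2).
- case=> const1 const2.
  have [p [q pq]] := translation (rows_perspective_of_laplace1 GP Q const1)
    (rows_perspective_of_laplace1 GPt (Qnet_transpose Q) (fun j i i' => const2 i i' j)).
  exact: translation_multiQnet pq.
Qed.
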